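(* For every partial abstraction $A$ and every expression $e$ (containing no $\&i$ markers, abstraction variables, or holes), every mapping $l$ with $\textsc{LambdaUnify}(A,e)\rightsquigarrow l$ is well-formed, i.e. $\mathrm{WFMap}(l)$ holds.
   Context: Expressions: $e ::= \lambda.\,e\mid(e\ e)\mid\$i\mid\&i\mid t$ with de Bruijn indices $\$i$ ($i\in\mathbb{N}$), overshifted markers $\&i$ ($i\in\mathbb{Z}$) and primitives $t$. Partial abstractions: $A ::= \lambda.\,A\mid(A\ A)\mid\$i\mid t\mid\alpha\mid ??_j$ with abstraction variables $\alpha$ and uniquely indexed holes $??_j$. Downshift: $\downarrow_d(\lambda.b)=\lambda.\downarrow_{d+1}b$; $\downarrow_d(f\ x)=(\downarrow_d f)(\downarrow_d x)$; $\downarrow_d\$i=\$i$ if $i<d$, $\$(i-1)$ if $i>d$, $\&(i-1)$ if $i=d$; $\downarrow_d\&i=\&(i-1)$; $\downarrow_d t=t$. A mapping is a finite map from abstraction variables and holes to expressions; $\textsc{DownshiftAll}(l)$ applies $\downarrow_0$ to every expression in $l$; $\mathrm{merge}(l_1,l_2)$ is the union of $l_1$ and $l_2$, undefined if some key is bound to two different expressions. $\textsc{LambdaUnify}$ is the relation given by the rules: $\textsc{LambdaUnify}(\alpha,e)\rightsquigarrow[\alpha\to e]$; $\textsc{LambdaUnify}(??_i,e)\rightsquigarrow[??_i\to e]$; if $\textsc{LambdaUnify}(A_1,e_1)\rightsquigarrow l_1$, $\textsc{LambdaUnify}(A_2,e_2)\rightsquigarrow l_2$ and $l=\mathrm{merge}(l_1,l_2)$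 is defined, then $\textsc{LambdaUnify}((A_1\ A_2),(e_1\ e_2))\rightsquigarrow l$; if $\textsc{LambdaUnify}(A,e)\rightsquigarrow l'$ then $\textsc{LambdaUnify}(\lambda.A,\lambda.e)\rightsquigarrow\textsc{DownshiftAll}(l')$; and $\textsc{LambdaUnify}(e,e)\rightsquigarrow[\,]$ (for $A$ equal to an expression $e$ with no holes or abstraction variables). Well-formedness: $\mathrm{WF}_d(\lambda.b)=\mathrm{WF}_{d+1}(b)$; $\mathrm{WF}_d(f\ x)=\mathrm{WF}_d(f)\wedge\mathrm{WF}_d(x)$; $\mathrm{WF}_d(\$i)$ true; $\mathrm{WF}_d(\&i)$ true iff $i<d$; $\mathrm{WF}_d(t)$ true. $\mathrm{WFMap}(l)$ means every expression in the range of $l$ satisfies $\mathrm{WF}_0$. *)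

From Stdlib Require Import ZArith Arith List.
Import ListNotations.
Set Implicit Arguments.

(* Expressions over a type of primitives Prim:
   e ::= lam. e | (e e) | $i (i : nat) | &i (i : Z) | t *)
Inductive expr (Prim : Type) : Type :=
| ELam : expr Prim -> expr Prim
| EApp : expr Prim -> expr Prim -> expr Prim
| EVar : nat -> expr Prim
| EOver : Z -> expr Prim
| EPrim : Prim -> expr Prim.
Arguments EVar {Prim}. Arguments EOver {Prim}.

Inductive pabs (Prim : Type) : Type :=
| ALam : pabs Prim -> pabs Prim
| AApp : pabs Prim -> pabs Prim -> pabs Prim
| AVar : nat -> pabs Prim
| APrim : Prim -> pabs Prim
| AAbsVar : nat -> pabs Prim
| AHole : nat -> pabs Prim.
Arguments AVar {Prim}. Arguments AAbsVar {Prim}. Arguments AHole {Prim}.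

Fixpoint holes (Prim : Type) (A : pabs Prim) : list nat :=
  match A with
  | ALam b => holes b
  | AApp f x => holes f ++ holes x
  | AHole j => [j]
  | _ => []
  end.

Definition uniquely_indexed_holes (Prim : Type) (A : pabs Prim) : Prop :=
  NoDup (holes A).

Fixpoint pabs_as_expr (Prim : Type) (A : pabs Prim) : option (expr Prim) :=
  match A with
  | ALam b => option_map (@ELam Prim) (pabs_as_expr b)
  | AApp f x =>
      match pabs_as_expr f, pabs_as_expr x with
      | Some f', Some x' => Some (EApp f' x')
      | _, _ => None
      end
  | AVar i => Some (EVar i)
  | APrim t => Some (EPrim t)
  | AAbsVar _ => None
  | AHole _ => None
  end.

Fixpoint no_over (Prim : Type) (e : expr Prim) : Prop :=
  match e with
  | ELam b => no_over b
  | EApp f x => no_over f /\ no_over x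
  | EOver _ => False
  | _ => True
  end.

Fixpoint downshift (Prim : Type) (d : nat) (e : expr Prim) : expr Prim :=
  match e with
  | ELam b => ELam (downshift (S d) b)
  | EApp f x => EApp (downshift d f) (downshift d x)
  | EVar i =>
      if i <? d then EVar i
      else if d <? i then EVar (i - 1)
      else EOver (Z.of_nat i - 1)%Z
  | EOver i => EOver (i - 1)%Z
  | EPrim t => EPrim t
  end.

Fixpoint WF (Prim : Type) (d : nat) (e : expr Prim) : Prop :=
  match e with
  | ELam b => WF (S d) b
  | EApp f x => WF d f /\ WF d x
  | EVar _ => True
  | EOver i => (i < Z.of_nat d)%Z
  | EPrim _ => True
  end.

Inductive key : Type :=
| KAbsVar : nat -> key
| KHole : nat -> key.

Definition key_eq_dec (k1 k2 : key) : {k1 = k2} + {k1 <> k2}.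
Proof. decide equality; apply Nat.eq_dec. Defined.

Definition mapping (Prim : Type) := key -> option (expr Prim).

Definition empty_map (Prim : Type) : mapping Prim := fun _ => None.

Definition single_map (Prim : Type) (k : key) (e : expr Prim) : mapping Prim :=
  fun k' => if key_eq_dec k' k then Some e else None.

Definition DownshiftAll (Prim : Type) (l : mapping Prim) : mapping Prim :=
  fun k => option_map (downshift 0) (l k).

Definition merge_defined (Prim : Type) (l1 l2 : mapping Prim) : Prop :=
  forall k e1 e2, l1 k = Some e1 -> l2 k = Some e2 -> e1 = e2.

Definition union_map (Prim : Type) (l1 l2 : mapping Prim) : mapping Prim :=
  fun k => match l1 k with Some e => Some e | None => l2 k end.

Inductive Merge (Prim : Type) (l1 l2 : mapping Prim) : mapping Prim -> Prop :=
| Merge_intro : merge_defined l1 l2 -> Merge l1 l2 (union_map l1 l2).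

Inductive LambdaUnify (Prim : Type) : pabs Prim -> expr Prim -> mapping Prim -> Prop :=
| LU_absvar : forall a e, LambdaUnify (AAbsVar a) e (single_map (KAbsVar a) e)
| LU_hole : forall i e, LambdaUnify (AHole i) e (single_map (KHole i) e)
| LU_app : forall A1 A2 e1 e2 l1 l2 l,
    LambdaUnify A1 e1 l1 -> LambdaUnify A2 e2 l2 -> Merge l1 l2 l ->
    LambdaUnify (AApp A1 A2) (EApp e1 e2) l
| LU_lam : forall A e l',
    LambdaUnify A e l' -> LambdaUnify (ALam A) (ELam e) (DownshiftAll l')
| LU_refl : forall A e, pabs_as_expr A = Some e -> LambdaUnify A e (@empty_map Prim).

Definition WFMap (Prim : Type) (l : mapping Prim) : Prop :=
  forall k e, l k = Some e -> WF 0 e.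

(* Every binding of a unifier is a subterm of e, which has no markers, pushed
   through some number of downshifts [↓_0].  A marker-free expression is
   well-formed at every depth, and [↓_d] preserves [WF_d]: the only marker it
   creates is [&(d-1)], and it decrements the existing ones. *)

From Stdlib Require Import Arith Lia.

Set Implicit Arguments.

Lemma no_over_WF (Prim : Type) (e : expr Prim) (d : nat) :
  no_over e -> WF d e.
Proof.
  revert d; induction e; simpl; intros d He; try tauto.
  - now apply IHe.
  - destruct He; split; auto.
Qed.

Lemma WF_downshift (Prim : Type) (e : expr Prim) (d : nat) :
  WF d e -> WF d (downshift d e).
Proof.
  revert d; induction e as [b IHb | f IHf x IHx | i | i | t]; simpl; intros d He.
  - now apply IHb.
  - destruct He; split; auto.
  - destruct (Nat.ltb_spec i d); simpl; [trivial |].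
    destruct (Nat.ltb_spec d i); simpl; [trivial | lia].
  - lia.
  - trivial.
Qed.

Lemma WFMap_empty (Prim : Type) : WFMap (@empty_map Prim).
Proof. discriminate. Qed.

Lemma WFMap_single (Prim : Type) (k : key) (e : expr Prim) :
  WF 0 e -> WFMap (single_map k e).
Proof.
  intros He k' e'; unfold single_map.
  destruct (key_eq_dec k' k); intros Hk; inversion Hk; subst; assumption.
Qed.

Lemma WFMap_union (Prim : Type) (l1 l2 : mapping Prim) :
  WFMap l1 -> WFMap l2 -> WFMap (union_map l1 l2).
Proof.
  intros H1 H2 k e; unfold union_map.
  destruct (l1 k) eqn:Hk1; [intros [= <-]; exact (H1 k _ Hk1) | apply H2].
Qed.

Lemma WFMap_DownshiftAll (Prim : Type) (l : mapping Prim) :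
  WFMap l -> WFMap (DownshiftAll l).
Proof.
  intros Hl k e; unfold DownshiftAll.
  destruct (l k) eqn:Hk; simpl; intros [= <-].
  apply WF_downshift, (Hl k _ Hk).
Qed.

Lemma LambdaUnify_WFMap (Prim : Type) (A : pabs Prim) (e : expr Prim)
    (l : mapping Prim) :
  LambdaUnify A e l -> no_over e -> WFMap l.
Proof.
  induction 1 as [a e | j e | A1 A2 e1 e2 l1 l2 l _ IH1 _ IH2 Hmerge
                 | A e l' _ IH | A e _]; simpl; intros He.
  - now apply WFMap_single, no_over_WF.
  - now apply WFMap_single, no_over_WF.
  - destruct He, Hmerge; apply WFMap_union; auto.
  - now apply WFMap_DownshiftAll, IH.
  - apply WFMap_empty.
Qed.

(* Unique hole indices are not needed: well-formedness concerns each binding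
   on its own. *)
Theorem lemmaB4 (Prim : Type) (A : pabs Prim) (e : expr Prim) (l : mapping Prim) :
  uniquely_indexed_holes A ->
  no_over e ->
  LambdaUnify A e l ->
  WFMap l.
Proof.
  intros _ He HA.
  exact (LambdaUnify_WFMap HA He).
Qed.
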